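(* Let $d\ge 2$ and $E,F\subset\mathbb F_q^d$. Then $$\sum_{t\in\mathbb F_q}\nu^2(t)\leq \frac{|E|^2|F|^2}{q}+q^{3d}\sum_{r\in\mathbb F_q}\Big|\sum_{m\in S_r}\overline{\widehat E(m)}\widehat F(m)\Big|^2.$$
   Context: $\mathbb F_q$ is a finite field of characteristic greater than two, and $\chi$ is a fixed nontrivial additive character of $\mathbb F_q$. For $f:\mathbb F_q^d\to\mathbb C$, $\widehat f(m)=q^{-d}\sum_{x\in\mathbb F_q^d}\chi(-m\cdot x)f(x)$; sets are identified with their indicator functions. For $m\in\mathbb F_q^d$, $\|m\|=m_1^2+\dots+m_d^2$; $S_r=\{x\in\mathbb F_q^d:\|x\|=r\}$. $\nu(t)=|\{(x,y)\in E\times F:\|x-y\|=t\}|$. *)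

From HB Require Import structures.
From mathcomp Require Import all_boot all_order all_algebra all_field.
Set Implicit Arguments. Unset Strict Implicit. Unset Printing Implicit Defensive.
Import Order.TTheory GRing.Theory Num.Theory.
Local Open Scope ring_scope.

Definition dotv (K : fieldType) (d : nat) (m x : 'rV[K]_d) : K :=
  \sum_(i < d) m 0 i * x 0 i.

Definition qnorm (K : fieldType) (d : nat) (m : 'rV[K]_d) : K :=
  \sum_(i < d) m 0 i ^+ 2.

Definition nontriv_add_char (K : finFieldType) (chi : K -> algC) : Prop :=
  [/\ chi 0 = 1, (forall x y, chi (x + y) = chi x * chi y) & exists x, chi x != 1].

Definition fhat (K : finFieldType) (d : nat) (chi : K -> algC)
    (E : {set 'rV[K]_d}) (m : 'rV[K]_d) : algC :=
  (#|K|%:R ^+ d)^-1 * \sum_(x : 'rV[K]_d) chi (- dotv m x) * (x \in E)%:R.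

Definition nu (K : finFieldType) (d : nat) (E F : {set 'rV[K]_d}) (t : K) : nat :=
  #|[set p : 'rV[K]_d * 'rV[K]_d | (p.1 \in E) && (p.2 \in F) && (qnorm (p.1 - p.2) == t)]|.

From HB Require Import structures.
From mathcomp Require Import all_boot all_order all_algebra all_field.
From mathcomp Require Import ring.
Import Order.TTheory GRing.Theory Num.Theory.
Local Open Scope ring_scope.

(* Write q = |F_q| and let w(m) = conj(hat E(m)) hat F(m).  For s, c in F_q put
     T(s) = sum_{(x,y) in E x F} chi(s ||x - y||)   (the transform of nu),
     B(c) = sum_m w(m) chi(c ||m||),
   so that, by Plancherel on F_q,
     sum_s |T(s)|^2 = q sum_t nu(t)^2,   sum_c |B(c)|^2 = q sum_r |A(r)|^2,
   where A(r) is the sphere sum of w over S_r.  Completing the square in the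
   Gauss sum G(c) = sum_m chi(c ||m||) gives q^{2d} B(c) = G(c) T(-1/(4c)),
   and |G(c)|^2 = q^d for c <> 0 (char K <> 2), hence
   |T(-1/(4c))|^2 = q^{3d} |B(c)|^2.  Since c |-> -1/(4c) is a bijection of
   F_q fixing 0 and T(0) = |E||F|, summing gives
     q sum_t nu(t)^2 <= |E|^2 |F|^2 + q^{3d} q sum_r |A(r)|^2,
   which is the theorem after division by q. *)

Section DotProduct.
Context {K : fieldType} {d : nat}.
Implicit Types (a b v : 'rV[K]_d) (k : K).

Lemma dotvC a b : dotv a b = dotv b a.
Proof. by apply: eq_bigr => j _; rewrite mulrC. Qed.

Lemma dotvDr v a b : dotv v (a + b) = dotv v a + dotv v b.
Proof. by rewrite /dotv -big_split; apply: eq_bigr => j _; rewrite mxE mulrDr. Qed.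

Lemma dotvDl a b v : dotv (a + b) v = dotv a v + dotv b v.
Proof. by rewrite dotvC dotvDr !(dotvC v). Qed.

Lemma dotvNr v a : dotv v (- a) = - dotv v a.
Proof. by rewrite /dotv -sumrN; apply: eq_bigr => j _; rewrite mxE mulrN. Qed.

Lemma dotvZl k a b : dotv (k *: a) b = k * dotv a b.
Proof. by rewrite /dotv mulr_sumr; apply: eq_bigr => j _; rewrite !mxE mulrA. Qed.

Lemma dot0v a : dotv 0 a = 0.
Proof. by rewrite /dotv big1 // => j _; rewrite mxE mul0r. Qed.

Lemma dotvv a : dotv a a = qnorm a.
Proof. by apply: eq_bigr => j _; rewrite expr2. Qed.

Lemma qnorm0 : qnorm (0 : 'rV[K]_d) = 0.
Proof. by rewrite /qnorm big1 // => j _; rewrite mxE expr0n. Qed.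

Lemma qnormD a b : qnorm (a + b) = qnorm a + 2 * dotv a b + qnorm b.
Proof.
rewrite /qnorm /dotv mulr_sumr -!big_split.
by apply: eq_bigr => j _; rewrite !mxE /=; ring.
Qed.

Lemma qnormZ k a : qnorm (k *: a) = k ^+ 2 * qnorm a.
Proof. by rewrite /qnorm mulr_sumr; apply: eq_bigr => j _; rewrite !mxE exprMn. Qed.

End DotProduct.

Lemma card_set_sum (T : finType) (P : pred T) :
  #|[set x | P x]|%:R = \sum_(x : T) (P x)%:R :> algC.
Proof.
rewrite -sum1_card natr_sum big_mkcond; apply: eq_bigr => x _.
by rewrite inE; case: (P x).
Qed.

Lemma sum_delta (T : finType) (a : T) (f : T -> algC) :
  \sum_(u : T) ((u == a)%:R * f u) = f a.
Proof.
rewrite (bigD1 a) //= big1 ?addr0 ?eqxx ?mul1r // => u hu.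
by rewrite (negbTE hu) mul0r.
Qed.

Lemma two_neq0_of_pchar {K : fieldType} : (2 \notin [pchar K])%N -> (2 : K) != 0.
Proof. by apply: contra => h2; rewrite inE /= h2. Qed.

Lemma four_neq0 {K : fieldType} : (2 : K) != 0 -> (4 : K) != 0.
Proof. by move=> two_neq0; rewrite -[4]/(2 * 2)%:R natrM mulf_neq0. Qed.

Lemma card_field_gt0 (K : finFieldType) : (0 < #|K|)%N.
Proof. by apply/card_gt0P; exists 0. Qed.

Lemma card_fieldX_neq0 (K : finFieldType) (n : nat) : (#|K|%:R : algC) ^+ n != 0.
Proof. by rewrite expf_neq0 // pnatr_eq0 -lt0n card_field_gt0. Qed.

Section AdditiveCharacter.
Context {K : finFieldType} {chi : K -> algC}.
Hypothesis hchi : nontriv_add_char chi.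
Local Notation q := (#|K|%:R : algC).

Lemma chi0 : chi 0 = 1. Proof. by case: hchi. Qed.

Lemma chiD x y : chi (x + y) = chi x * chi y. Proof. by case: hchi. Qed.

Lemma chiN x : chi (- x) * chi x = 1.
Proof. by rewrite -chiD addNr chi0. Qed.

(* chi takes values in the #|K|-th roots of unity: the product of all values
   of chi is invariant under translation by x. *)
Lemma chiX_card x : chi x ^+ #|K| = 1.
Proof.
have prod_neq0 : \prod_(y : K) chi y != 0.
  apply/prodf_neq0 => y _; apply/eqP => chiy0.
  by move: (chiN y); rewrite chiy0 mulr0 => /eqP; rewrite eq_sym oner_eq0.
have := (reindex_inj (addIr x) : \prod_(y : K) chi y = \prod_(y : K) chi (y + x)).
under [in X in _ = X -> _]eq_bigr do rewrite chiD.
rewrite big_split /= prodr_const cardT -cardE => /eqP.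
by rewrite -{1}[\prod__ _]mulr1 => /eqP /mulfI -/(_ prod_neq0) <-.
Qed.

Lemma norm_chi x : `|chi x| = 1.
Proof.
apply/eqP; rewrite -(@pexpr_eq1 _ _ #|K|) ?normr_ge0 ?card_field_gt0 //.
by rewrite -normrX chiX_card normr1.
Qed.

Lemma conj_chi x : (chi x)^* = chi (- x).
Proof.
have chi_neq0 : chi x != 0 by rewrite -normr_eq0 norm_chi oner_eq0.
by apply: (mulfI chi_neq0); rewrite -normCK norm_chi expr1n mulrC chiN.
Qed.

(* Orthogonality: a nontrivial character composed with an additive map sums
   to zero, by translation invariance of the sum. *)
Lemma sum_chi_additive (V : finZmodType) (L : V -> K) :
  (forall a b, L (a + b) = L a + L b) -> (exists w, chi (L w) != 1) ->
  \sum_(m : V) chi (L m) = 0.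
Proof.
move=> L_add [w chiw_neq1].
have := (reindex_inj (addIr w) : \sum_(m : V) chi (L m) = \sum_(m : V) chi (L (m + w))).
under [in X in _ = X -> _]eq_bigr do rewrite L_add chiD.
rewrite -mulr_suml => /eqP; rewrite -subr_eq0 -{1}[\sum__ _]mulr1 -mulrBr.
by rewrite mulf_eq0 subr_eq0 [1 == _]eq_sym (negbTE chiw_neq1) orbF => /eqP.
Qed.

Lemma sum_chi_scale (a : K) : \sum_(x : K) chi (a * x) = (a == 0)%:R * q.
Proof.
have [->|a_neq0] := eqVneq a 0.
  under eq_bigr do rewrite mul0r chi0.
  by rewrite sumr_const mul1r cardT -cardE.
rewrite mul0r; apply: sum_chi_additive; first by move=> x y; rewrite mulrDr.
by case: hchi => _ _ [x0 hx0]; exists (x0 / a); rewrite mulrC divfK.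
Qed.

Lemma plancherel (I : finType) (w : I -> algC) (N : I -> K) :
  \sum_(s : K) `|\sum_i w i * chi (s * N i)| ^+ 2
  = q * \sum_(r : K) `|\sum_(i | N i == r) w i| ^+ 2.
Proof.
under eq_bigr do rewrite normCK.
under [in RHS]eq_bigr do rewrite normCK.
transitivity (q * \sum_i \sum_j w i * (w j)^* * (N i == N j)%:R).
  transitivity (\sum_s \sum_i \sum_j (w i * (w j)^*) * chi ((N i - N j) * s)).
    apply: eq_bigr => s _; rewrite rmorph_sum mulr_suml; apply: eq_bigr => i _.
    rewrite mulr_sumr; apply: eq_bigr => j _.
    rewrite rmorphM /= conj_chi mulrBl chiD [N i * s]mulrC [N j * s]mulrC; ring.
  rewrite exchange_big mulr_sumr; apply: eq_bigr => i _.
  rewrite exchange_big mulr_sumr; apply: eq_bigr => j _.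
  by rewrite -mulr_sumr sum_chi_scale subr_eq0; ring.
congr (q * _); symmetry.
transitivity (\sum_r \sum_i \sum_j (r == N i)%:R * (w i * (w j)^* * (N j == r)%:R)).
  apply: eq_bigr => r _; rewrite rmorph_sum big_mkcond [X in _ * X]big_mkcond.
  rewrite mulr_suml; apply: eq_bigr => i _; rewrite mulr_sumr; apply: eq_bigr => j _.
  by rewrite [r == _]eq_sym; case: eqP => _; case: eqP => _ /=;
    rewrite ?conjC0 ?mulr0 ?mul0r ?mulr1 ?mul1r.
rewrite exchange_big; apply: eq_bigr => i _.
by rewrite exchange_big; apply: eq_bigr => j _; rewrite sum_delta eq_sym.
Qed.

Variable d : nat.

Lemma sum_chi_dot (v : 'rV[K]_d) :
  \sum_(m : 'rV[K]_d) chi (dotv v m) = (v == 0)%:R * q ^+ d.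
Proof.
have [->|v_neq0] := eqVneq v 0.
  under eq_bigr do rewrite dot0v chi0.
  by rewrite sumr_const mul1r cardT -cardE card_mx mul1n natrX.
rewrite mul0r; apply: sum_chi_additive; first by move=> x y; rewrite dotvDr.
have [i vi_neq0] : exists i, v 0 i != 0.
  apply/existsP; apply: contraNT v_neq0; rewrite negb_exists => /forallP v0.
  by apply/eqP/rowP => j; rewrite !mxE; exact/eqP/negbNE/v0.
case: hchi => _ _ [x0 hx0]; exists ((x0 / v 0 i) *: delta_mx 0 i).
rewrite /dotv (bigD1 i) //= big1 ?addr0; last first.
  by move=> j ji; rewrite !mxE (negbTE ji) andbF !mulr0.
by rewrite !mxE !eqxx mulr1 mulrC divfK.
Qed.

Definition gauss_sum (c : K) : algC := \sum_(m : 'rV[K]_d) chi (c * qnorm m).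

Hypothesis two_neq0 : (2 : K) != 0.

(* |G(c)|^2 = q^d for c <> 0: expanding |G(c)|^2 and shifting m by m' leaves
   a character sum over the linear form 2c u . m', which vanishes unless u = 0. *)
Lemma norm_gauss_sum (c : K) : c != 0 -> `|gauss_sum c| ^+ 2 = q ^+ d.
Proof.
move=> c_neq0; rewrite normCK /gauss_sum rmorph_sum mulr_sumr.
transitivity (\sum_(m' : 'rV[K]_d) \sum_(u : 'rV[K]_d)
   chi (c * qnorm u) * chi (dotv ((2 * c) *: u) m')).
  apply: eq_bigr => m' _; rewrite mulr_suml (reindex_inj (addIr m')) /=.
  apply: eq_bigr => u _; rewrite conj_chi -!chiD; congr chi.
  by rewrite qnormD dotvZl; ring.
rewrite exchange_big /=.
transitivity (\sum_(u : 'rV[K]_d) ((u == 0)%:R * (chi (c * qnorm u) * q ^+ d))).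
  apply: eq_bigr => u _; rewrite -mulr_sumr sum_chi_dot scaler_eq0 mulf_eq0.
  by rewrite (negbTE two_neq0) (negbTE c_neq0) /=; ring.
by rewrite sum_delta qnorm0 mulr0 chi0 mul1r.
Qed.

(* Completing the square: a linear phase twists the Gauss sum by a constant. *)
Lemma gauss_sum_shift (c : K) (z : 'rV[K]_d) : c != 0 ->
  \sum_(m : 'rV[K]_d) chi (c * qnorm m + dotv m z) =
  chi (- (4 * c)^-1 * qnorm z) * gauss_sum c.
Proof.
move=> c_neq0; rewrite /gauss_sum (reindex_inj (addIr (- (2 * c)^-1 *: z))) /=.
rewrite mulr_sumr; apply: eq_bigr => m _; rewrite -chiD; congr chi.
rewrite qnormD qnormZ dotvDl !dotvZl dotvv [dotv m (_ *: _)]dotvC dotvZl (dotvC z).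
by field; rewrite c_neq0 two_neq0 four_neq0.
Qed.

End AdditiveCharacter.

Section DistanceTransforms.
Context {K : finFieldType} {chi : K -> algC}.
Hypothesis hchi : nontriv_add_char chi.
Hypothesis two_neq0 : (2 : K) != 0.
Context {d : nat} (E F : {set 'rV[K]_d}).
Local Notation q := (#|K|%:R : algC).

Definition pair_ind (p : 'rV[K]_d * 'rV[K]_d) : algC :=
  ((p.1 \in E) && (p.2 \in F))%:R.

Definition dist_transform (s : K) : algC :=
  \sum_(p : 'rV[K]_d * 'rV[K]_d) pair_ind p * chi (s * qnorm (p.1 - p.2)).

Definition spectral_transform (c : K) : algC :=
  \sum_(m : 'rV[K]_d) (fhat chi E m)^* * fhat chi F m * chi (c * qnorm m).

Lemma nu_pair_sum (t : K) :
  (nu E F t)%:R = \sum_(p | qnorm (p.1 - p.2) == t) pair_ind p.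
Proof.
rewrite /nu card_set_sum [RHS]big_mkcond; apply: eq_bigr => p _.
by rewrite /pair_ind; case: (qnorm _ == t); rewrite ?andbT ?andbF.
Qed.

Lemma dist_transform_energy :
  \sum_(s : K) `|dist_transform s| ^+ 2 = q * \sum_(t : K) ((nu E F t)%:R ^+ 2 : algC).
Proof.
rewrite (plancherel hchi); congr (q * _); apply: eq_bigr => t _.
by rewrite -nu_pair_sum normr_nat.
Qed.

Lemma spectral_transform_energy :
  \sum_(c : K) `|spectral_transform c| ^+ 2 =
  q * \sum_(r : K) `| \sum_(m : 'rV[K]_d | qnorm m == r)
                        (fhat chi E m)^* * fhat chi F m | ^+ 2.
Proof. exact: plancherel. Qed.

Lemma dist_transform0 : `|dist_transform 0| ^+ 2 = (#|E| ^ 2 * #|F| ^ 2)%:R.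
Proof.
have -> : dist_transform 0 = #|setX E F|%:R.
  rewrite card_set_sum; apply: eq_bigr => p _.
  by rewrite mul0r (chi0 hchi) mulr1.
by rewrite cardsX normr_nat -natrX expnMn.
Qed.

Lemma spectral_dist_transform (c : K) : c != 0 ->
  (q ^+ d) ^+ 2 * spectral_transform c =
  @gauss_sum K chi d c * dist_transform (- (4 * c)^-1).
Proof.
move=> c_neq0.
transitivity (\sum_(m : 'rV[K]_d) \sum_(x : 'rV[K]_d) \sum_(y : 'rV[K]_d)
   pair_ind (x, y) * chi (c * qnorm m + dotv m (x - y))).
  rewrite mulr_sumr; apply: eq_bigr => m _.
  rewrite /fhat rmorphM /= fmorphV rmorphXn /= conjC_nat rmorph_sum.
  set X := \sum_x _; set Y := \sum_x _.
  have qd_neq0 := card_fieldX_neq0 K d.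
  have -> : (q ^+ d) ^+ 2 * ((q ^+ d)^-1 * X * ((q ^+ d)^-1 * Y) * chi (c * qnorm m))
     = X * Y * chi (c * qnorm m) by field.
  rewrite /X /Y -mulrA mulr_suml; apply: eq_bigr => x _.
  rewrite mulr_suml mulr_sumr; apply: eq_bigr => y _.
  rewrite rmorphM /= conjC_nat (conj_chi hchi) opprK /pair_ind -mulnb natrM.
  by rewrite dotvDr dotvNr !(chiD hchi); ring.
rewrite exchange_big /=; under eq_bigr do rewrite exchange_big /=.
rewrite pair_bigA mulr_sumr; apply: eq_bigr => -[x y] _ /=.
by rewrite -mulr_sumr (gauss_sum_shift hchi) //; ring.
Qed.

(* Taking absolute values and cancelling |G(c)|^2 = q^d. *)
Lemma norm_dist_transform (c : K) : c != 0 ->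
  `|dist_transform (- (4 * c)^-1)| ^+ 2 = q ^+ (3 * d) * `|spectral_transform c| ^+ 2.
Proof.
move=> c_neq0.
have qd_neq0 := card_fieldX_neq0 K d.
have := congr1 (fun z => `|z| ^+ 2) (spectral_dist_transform _ c_neq0).
rewrite /= !normrM !exprMn (norm_gauss_sum hchi) // normrX ger0_norm ?ler0n //.
move=> energy; apply: (mulfI qd_neq0); rewrite -energy mulnC exprM; ring.
Qed.

(* Reindexing by the involution s = -1/(4c), which fixes 0, and dropping the
   nonnegative term |B(0)|^2 on the way. *)
Lemma dist_transform_energy_le :
  \sum_(s : K) `|dist_transform s| ^+ 2 <=
  (#|E| ^ 2 * #|F| ^ 2)%:R + q ^+ (3 * d) * \sum_(c : K) `|spectral_transform c| ^+ 2.
Proof.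
set f := fun c : K => - (4 * c)^-1.
have fK : involutive f.
  by move=> c; rewrite /f mulrN invrN opprK invfM invrK mulKf ?four_neq0.
rewrite (reindex_inj (can_inj fK)) /= [X in X <= _](bigD1 0) //=.
rewrite {1}/f mulr0 invr0 oppr0 dist_transform0 lerD2l.
rewrite [X in _ <= _ * X](bigD1 0) //= mulrDr -[X in X <= _]add0r.
apply: lerD; first by rewrite mulr_ge0 ?exprn_ge0 ?ler0n.
by rewrite mulr_sumr; apply: ler_sum => c c_neq0; rewrite norm_dist_transform.
Qed.

End DistanceTransforms.

Theorem mainTheorem8 (K : finFieldType) (hchar : (2 \notin [pchar K])%N)
    (chi : K -> algC) (hchi : nontriv_add_char chi)
    (d : nat) (hd : (2 <= d)%N) (E F : {set 'rV[K]_d}) :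
  \sum_(t : K) ((nu E F t)%:R ^+ 2 : algC)
    <= (#|E| ^ 2 * #|F| ^ 2)%:R / #|K|%:R
       + #|K|%:R ^+ (3 * d) *
         \sum_(r : K) `| \sum_(m : 'rV[K]_d | qnorm m == r)
                           (fhat chi E m)^* * fhat chi F m | ^+ 2.
Proof.
have energy := dist_transform_energy_le hchi (two_neq0_of_pchar hchar) E F.
rewrite (dist_transform_energy hchi) (spectral_transform_energy hchi) in energy.
have q_gt0 : 0 < #|K|%:R :> algC by rewrite ltr0n card_field_gt0.
rewrite -(ler_pM2l q_gt0); apply: (le_trans energy).
set q := (#|K|%:R : algC); set N := (_ ^ 2 * _)%:R.
by rewrite mulrDr mulrCA [q * (N / q)]mulrC divfK ?lt0r_neq0.
Qed.
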